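(* In the setting below, two vertices $\rho_\lambda W(D_5)$ and $\rho_{\lambda'}W(D_5)$ ($\lambda,\lambda'\in\Lambda$) of the GKM graph $\mathcal G(EIII)$ are adjacent if and only if $\lambda-\lambda'=\alpha$ for some root $\alpha\in\Phi(E_6)$, and in that case the label of the corresponding edge is $(\alpha)$.
   Context: Identify the dual of the Lie algebra of a maximal torus $T$ of $E_6$ with $\{\sum_{i=1}^8x_ie_i\in\mathbb R^8: x_6=x_7=-x_8\}$ with the standard inner product. The simple roots are $\alpha_1=\frac12(e_1-e_2-e_3-e_4-e_5-e_6-e_7+e_8)$, $\alpha_2=e_1+e_2$, $\alpha_i=e_{i-1}-e_{i-2}$ ($3\le i\le6$), and $\Phi(E_6)=\{\pm(e_i+e_j),\pm(e_i-e_j)\ (1\le i<j\le5)\}\cup\{\pm\frac12(\sum_{k=1}^5\mu_ke_k+e_8-e_7-e_6): \mu_k=\pm1,\ \prod\mu_k=1\}$. $H^*(BT)=H^*(BT;\mathbb Z)$ is the polynomial (symmetric) algebra over $\mathbb Z$ on the lattice $H^2(BT)$ spanned by $t_0=\frac12(e_1+\dots+e_5)-\frac16(e_8-e_7-e_6)$, $t_i=e_i+\frac13(e_8-e_7-e_6)$ ($1\le i\le5$), $x=\frac12(e_1+\dots+e_5-e_6-e_7+e_8)$; $W(E_6)$ acts on it. Let $W(D_5)\subset W(E_6)$ be generated by the reflections of $\alpha_2,\dots,\alpha_6$, let $\bar t=\frac23(e_8-e_7-e_6)$ (fixed by $W(D_5)$), $\Lambda=\{w(\bar t):w\in W(E_6)\}$,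 and for $\lambda\in\Lambda$ fix $\rho_\lambda\in W(E_6)$ with $\rho_\lambda(\bar t)=\lambda$ (so $wW(D_5)\mapsto w(\bar t)$ identifies $W(E_6)/W(D_5)$ with $\Lambda$). The GKM graph $\mathcal G(EIII)$ has vertex set $W(E_6)/W(D_5)$ and, for distinct vertices $vW(D_5)\ne wW(D_5)$ and each positive root $\alpha$ (positive with respect to the simple roots above) with $\sigma_\alpha vW(D_5)=wW(D_5)$, an edge labelled by the ideal $(\alpha)\subset H^*(BT)$; here $\sigma_\alpha$ is the reflection of $\alpha$. *)

(* Vectors of R^8 are modelled by rational row vectors
   'rV[rat]_8 (all objects in the statement are rational). *)
From mathcomp Require Import all_boot all_order all_algebra.
From mathcomp Require Import mpoly.
Set Implicit Arguments. Unset Strict Implicit. Unset Printing Implicit Defensive.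
Import Order.TTheory GRing.Theory Num.Theory.
Local Open Scope ring_scope.

Notation vec := 'rV[rat]_8.

(* e_i, 1 <= i <= 8 (stored at index i-1) *)
Definition e (i : nat) : vec := \row_(j < 8) (if (j : nat) == i.-1 then 1 else 0).

Definition dot (u v : vec) : rat := \sum_(j < 8) u 0 j * v 0 j.

Definition refl (a v : vec) : vec := v - ((2 * dot v a) / dot a a) *: a.

Definition isRoot (a : vec) : Prop :=
  (exists i j : nat, [/\ (1 <= i)%N, (i < j)%N & (j <= 5)%N] /\
     (a = e i + e j \/ a = - (e i + e j) \/ a = e i - e j \/ a = - (e i - e j)))
  \/
  (exists mu : 'I_5 -> rat,
     (forall k, mu k = 1 \/ mu k = -1) /\ \prod_(k < 5) mu k = 1 /\
     let b := (1/2) *: (\sum_(k < 5) mu k *: e k.+1 + e 8 - e 7 - e 6) in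
     (a = b \/ a = - b)).

(* simple roots alpha_1, ..., alpha_6 (stored at index i-1) *)
Definition alpha1 : vec :=
  (1/2) *: (e 1 - e 2 - e 3 - e 4 - e 5 - e 6 - e 7 + e 8).
Definition simple (i : 'I_6) : vec :=
  match (i : nat) with
  | 0 => alpha1
  | 1 => e 1 + e 2
  | k => e k - e k.-1   (* alpha_{k+1} = e_k - e_{k-1}, 2 <= k <= 5 *)
  end.

Definition isPosRoot (a : vec) : Prop :=
  isRoot a /\ exists c : 'I_6 -> nat, a = \sum_(i < 6) (c i)%:R *: simple i.

Definition endo := vec -> vec.
Definition word_act (s : seq vec) : endo :=
  foldr (fun a f => fun v => refl a (f v)) id s.

Definition inWE6 (w : endo) : Prop :=
  exists s : seq vec, (forall a, a \in s -> isRoot a) /\ forall v, w v = word_act s v.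

Definition inWD5 (w : endo) : Prop :=
  exists s : seq vec,
    (forall a, a \in s -> exists i : 'I_6, (0 < (i : nat))%N /\ a = simple i) /\
    forall v, w v = word_act s v.

Definition sameCoset (v w : endo) : Prop :=
  exists u, inWD5 u /\ forall x, w x = v (u x).

Definition tbar : vec := (2/3) *: (e 8 - e 7 - e 6).

Definition inLambda (l : vec) : Prop := exists w, inWE6 w /\ w tbar = l.

(* GKM graph G(EIII): an edge between the vertices v W(D_5) and w W(D_5)
   for the positive root beta (its label being the ideal (beta)). *)
Definition gkm_edge (v w : endo) (beta : vec) : Prop :=
  ~ sameCoset v w /\ isPosRoot beta /\ sameCoset (fun x => refl beta (v x)) w.

Definition gkm_adjacent (v w : endo) : Prop := exists beta, gkm_edge v w beta.

(* H^*(BT) = Sym_Z(H^2(BT)).  H^2(BT) is the lattice spanned by t_0,...,t_5, x;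
   since t_0 = 3x - (t_1+...+t_5), (t_1,...,t_5,x) is a Z-basis, and we identify
   H^*(BT) with the polynomial ring {mpoly int[6]} on that basis. *)
Definition u0 : vec := e 8 - e 7 - e 6.
Definition t0 : vec := (1/2) *: (e 1 + e 2 + e 3 + e 4 + e 5) - (1/6) *: u0.
Definition t (i : nat) : vec := e i + (1/3) *: u0.
Definition xgen : vec := (1/2) *: (e 1 + e 2 + e 3 + e 4 + e 5 - e 6 - e 7 + e 8).

Definition H2basis (i : 'I_6) : vec :=
  if (i : nat) == 5%N then xgen else t i.+1.

Definition HBT := {mpoly int[6]}.

Definition vec_of (c : 'I_6 -> int) : vec := \sum_(i < 6) (c i)%:~R *: H2basis i.
Definition h2 (c : 'I_6 -> int) : HBT := \sum_(i < 6) (c i)%:MP * 'X_i.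

Definition in_H2 (a : vec) : Prop := exists c, vec_of c = a.

(* the principal ideal (a) of H^*(BT), for a in H^2(BT), as a predicate *)
Definition label (a : vec) : HBT -> Prop :=
  fun p => exists c, vec_of c = a /\ exists r : HBT, p = r * h2 c.

(* In the coordinates of the root lattice with respect to the simple roots, reflections
   act by integer matrices, so everything below reduces to a finite computation.  A search
   of the orbit of tbar yields 27 words W_p in the simple reflections with distinct images
   W_p tbar, and for each positive root r a factorization sigma_r W_p = W_q u with u in
   W(D5).  Hence every element of W(E6) is some W_p u with u in W(D5), and v W(D5) =
   w W(D5) exactly when v tbar = w tbar: an edge labelled beta joins rho W(D5) and
   rho' W(D5) exactly when sigma_beta lambda = lambda'.  As tbar is minuscule, the pairing
   c of lambda with a root beta lies in {-1, 0, 1}, so sigma_beta lambda = lambda - c beta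
   differs from lambda by +-beta.  Conversely, if lambda - lambda' = alpha is a root, the
   pairings of lambda and lambda' with alpha differ by 2, which forces the first to be 1
   and sigma_alpha lambda = lambda'. *)

From mathcomp Require Import all_boot all_order all_algebra.
From mathcomp Require Import mpoly.
From mathcomp Require Import ring zify.
Set Implicit Arguments. Unset Strict Implicit. Unset Printing Implicit Defensive.
Import Order.TTheory GRing.Theory Num.Theory.
Local Open Scope ring_scope.

(** * Computations in the root lattice *)

Definition cartan (i k : nat) : int :=
  match i, k with
  | 0, 0 | 1, 1 | 2, 2 | 3, 3 | 4, 4 | 5, 5 => 2%R
  | 0, 2 | 2, 0 | 1, 3 | 3, 1 | 2, 3 | 3, 2 | 3, 4 | 4, 3 | 4, 5 | 5, 4 => (-1)%R
  | _, _ => 0%R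
  end%N.

Definition mk6 {T} (f : nat -> T) : seq T := [:: f 0; f 1; f 2; f 3; f 4; f 5]%N.

Lemma nth_mk6 {T} (x0 : T) f k : (k < 6)%N -> nth x0 (mk6 f) k = f k.
Proof. by case: k => [|[|[|[|[|[|k]]]]]]. Qed.

Definition mk8 {T} (f : nat -> T) : seq T := [:: f 0; f 1; f 2; f 3; f 4; f 5; f 6; f 7]%N.

Lemma nth_mk8 {T} (x0 : T) f j : (j < 8)%N -> nth x0 (mk8 f) j = f j.
Proof. by case: j => [|[|[|[|[|[|[|[|j]]]]]]]]. Qed.

Definition pairing (v : seq int) (k : nat) : int :=
  v`_0 * cartan 0 k + v`_1 * cartan 1 k + v`_2 * cartan 2 k +
  v`_3 * cartan 3 k + v`_4 * cartan 4 k + v`_5 * cartan 5 k.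

Definition zform (u v : seq int) : int :=
  u`_0 * pairing v 0 + u`_1 * pairing v 1 + u`_2 * pairing v 2 +
  u`_3 * pairing v 3 + u`_4 * pairing v 4 + u`_5 * pairing v 5.

Definition unitv (k : nat) : seq int := mk6 (fun i => (i == k)%:R).

(* A matrix [F] stands for the map [x |-> x + \sum_k <x, alpha_k> F_k]. *)
Definition compose_refl (r : seq int) (F : seq (seq int)) : seq (seq int) :=
  mk6 (fun k => let Fk := nth [::] F k in let c := r`_k + zform Fk r in
    mk6 (fun i => Fk`_i - c * r`_i)).

Definition word_matrix (w : seq (seq int)) : seq (seq int) :=
  foldr compose_refl (mk6 (fun=> mk6 (fun=> 0))) w.

(* [tbar] pairs to 1 with alpha_1 and to 0 with the other simple roots, so the word [w]
   maps [tbar] to [tbar] plus the vector with coordinates [lambda_coord w], and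
   [lambda_pairing o r] is the pairing of [tbar + o] with [r]. *)
Definition lambda_coord (w : seq (seq int)) : seq int := nth [::] (word_matrix w) 0.

Definition lambda_pairings (w : seq (seq int)) : seq int :=
  map (pairing (lambda_coord w)) (iota 0 6).

Definition lambda_pairing (o r : seq int) : int := r`_0 + zform o r.

(* The positive roots are the vectors of norm 2 below the highest root. *)
Fixpoint box (bs : seq nat) : seq (seq int) :=
  if bs is b :: bs' then [seq x%:R :: v | x <- iota 0 b.+1, v <- box bs'] else [:: [::]].

Definition pos_roots : seq (seq int) :=
  [seq v <- box [:: 1; 2; 2; 3; 2; 1]%N | zform v v == 2].

(* A breadth-first search of the orbit of [tbar], keeping one word in the simple
   reflections for each point of the orbit, together with its coordinates; the minimal
   coset representatives have length at most 16. *)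
Definition refl_simple_lambda (o : seq int) (k : nat) : seq int :=
  mk6 (fun i => o`_i - lambda_pairing o (unitv k) * (unitv k)`_i).

Definition extend_orbit (orb : seq (seq (seq int) * seq int)) :=
  foldl (fun acc wo => foldl (fun acc k =>
      let o := refl_simple_lambda wo.2 k in
      if o \in map snd acc then acc else rcons acc (unitv k :: wo.1, o))
    acc (iota 0 6)) orb orb.

Definition coset_words : seq (seq (seq int)) :=
  map fst (iter 16 extend_orbit [:: ([::], mk6 (fun=> 0))]).

Definition coset_word (p : nat) : seq (seq int) := nth [::] coset_words p.

Definition simple_image (F : seq (seq int)) (j : nat) : seq int :=
  mk6 (fun i => (unitv j)`_i + pairing (mk6 (fun k => (nth [::] F k)`_i)) j).

Definition mul_simple (F : seq (seq int)) (j : nat) : seq (seq int) :=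
  mk6 (fun k => if k == j then mk6 (fun i => (nth [::] F j)`_i - (simple_image F j)`_i)
                else nth [::] F k).

(* Right descent in W(D5): multiply by the reflection in a simple root of D5 sent to a
   negative root, as long as there is one.  Its output is only a candidate, certified in
   [schreier_entry]; 20 is the length of the longest element of W(D5). *)
Fixpoint d5_reduce (n : nat) (F : seq (seq int)) : seq nat :=
  if n is n'.+1 then
    if [seq j <- iota 1 5 | has (fun x => x < 0) (simple_image F j)] is j :: _
    then j :: d5_reduce n' (mul_simple F j) else [::]
  else [::].

Definition d5_word (u : seq nat) : bool := all (fun k => 0 < k < 6)%N u.

(* The identity sigma_r W_p = W_q u with u in W(D5), where W_q is the coset word with the
   same image of [tbar] as r :: W_p. *)
Definition schreier_entry (ws : seq (seq (seq int))) (ls : seq (seq int))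
    (p : nat) (r : seq int) : bool :=
  let w := r :: nth [::] ws p in
  let q := index (lambda_coord w) ls in
  let u := rev (d5_reduce 20 (word_matrix (rev (nth [::] ws q) ++ w))) in
  [&& (q < 27)%N, d5_word u & word_matrix w == word_matrix (nth [::] ws q ++ map unitv u)].

(* [ws] and [rs] are parameters so that [vm_compute] evaluates [coset_words] only once. *)
Definition schreier_check (ws : seq (seq (seq int))) (rs : seq (seq int)) : bool :=
  let ls := map lambda_coord ws in all (fun p => all (schreier_entry ws ls p) rs) (iota 0 27).

Lemma pos_rootsP : all (fun r => (zform r r == 2) && all (>= 0) r) pos_roots.
Proof. by vm_compute. Qed.

Lemma coset_wordsP : [&& size coset_words == 27%N, coset_word 0 == [::] &
  all (all (fun r => r \in map unitv (iota 0 6))) coset_words].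
Proof. by vm_compute. Qed.

Lemma coset_lambdas_uniq : uniq (map lambda_pairings coset_words).
Proof. by vm_compute. Qed.

Lemma minusculeP :
  all (fun w => all (fun r => lambda_pairing (lambda_coord w) r \in [:: -1; 0; 1]) pos_roots)
    coset_words.
Proof. by vm_compute. Qed.

Lemma schreierP : schreier_check coset_words pos_roots.
Proof. by vm_compute. Qed.

(** * The inner product space Q^8 *)

Lemma dotC u v : dot u v = dot v u.
Proof. by apply: eq_bigr => j _; rewrite mulrC. Qed.

Lemma dotDl u v w : dot (u + v) w = dot u w + dot v w.
Proof. by rewrite /dot -big_split; apply: eq_bigr => j _; rewrite !mxE mulrDl. Qed.

Lemma dotZl a u w : dot (a *: u) w = a * dot u w.
Proof. by rewrite /dot mulr_sumr; apply: eq_bigr => j _; rewrite !mxE mulrA. Qed.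

Lemma dotNl u w : dot (- u) w = - dot u w.
Proof. by rewrite -scaleN1r dotZl mulN1r. Qed.

Lemma dotBl u v w : dot (u - v) w = dot u w - dot v w.
Proof. by rewrite dotDl dotNl. Qed.

Lemma dotNr u w : dot w (- u) = - dot w u.
Proof. by rewrite dotC dotNl dotC. Qed.

Lemma dot0l w : dot 0 w = 0.
Proof. by rewrite -(scale0r 0) dotZl mul0r. Qed.

Lemma dot_suml (I : Type) (s : seq I) (P : pred I) (F : I -> vec) w :
  dot (\sum_(i <- s | P i) F i) w = \sum_(i <- s | P i) dot (F i) w.
Proof. by elim/big_rec2: _ => [|i x y _ <-]; rewrite ?dot0l ?dotDl. Qed.

Lemma refl_opp a v : refl (- a) v = refl a v.
Proof. by rewrite /refl dotNl !dotNr opprK mulrN mulNr scaleNr scalerN opprK. Qed.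

Lemma refl_involutive a v : dot a a != 0 -> refl a (refl a v) = v.
Proof.
move=> a0; rewrite /refl dotBl dotZl; move: (dot v a) (dot a a) a0 => d n n0.
by apply/rowP => j; rewrite !mxE; field.
Qed.

(* Every vector of the statement lies in (1/6) Z^8. *)
Definition vec6 (l : seq int) : vec := \row_(j < 8) ((l`_j)%:~R / 6).

Ltac vec8_eq := apply/rowP; case=> [[|[|[|[|[|[|[|[|?]]]]]]]] ?] //;
  rewrite !mxE /=; apply/eqP; vm_compute; reflexivity.

Definition sroot (k : nat) : vec := simple (inord k).

Lemma simple_sroot (i : 'I_6) : simple i = sroot i.
Proof. by rewrite /sroot inord_val. Qed.

Definition simple6 (k : nat) : seq int :=
  match k with
  | 0%N => [:: 3; -3; -3; -3; -3; -3; -3; 3]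
  | 1%N => [:: 6; 6; 0; 0; 0; 0; 0; 0]
  | 2%N => [:: -6; 6; 0; 0; 0; 0; 0; 0]
  | 3%N => [:: 0; -6; 6; 0; 0; 0; 0; 0]
  | 4%N => [:: 0; 0; -6; 6; 0; 0; 0; 0]
  | _ => [:: 0; 0; 0; -6; 6; 0; 0; 0]
  end.

Lemma sroot_vec6 k : (k < 6)%N -> sroot k = vec6 (simple6 k).
Proof.
rewrite /sroot /simple /alpha1 /e.
by case: k => [|[|[|[|[|[|k]]]]]] // _; rewrite inordK //; vec8_eq.
Qed.

Lemma tbar_vec6 : tbar = vec6 [:: 0; 0; 0; 0; 0; -4; -4; 4].
Proof. rewrite /tbar /e; vec8_eq. Qed.

Lemma dot_vec6 l m : dot (vec6 l) (vec6 m) = (\sum_(j < 8) l`_j * m`_j)%:~R / 36.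
Proof.
rewrite rmorph_sum /= mulr_suml; apply: eq_bigr => j _.
by rewrite !mxE intrM; field.
Qed.

Lemma vec6_sum n (c : 'I_n -> int) (l : 'I_n -> seq int) :
  \sum_(i < n) (c i)%:~R *: vec6 (l i) = vec6 (mk8 (fun j => \sum_(i < n) c i * (l i)`_j)).
Proof.
apply/rowP => j; rewrite summxE !mxE nth_mk8 // rmorph_sum mulr_suml.
by apply: eq_bigr => i _; rewrite !mxE /= intrM mulrA.
Qed.

Lemma dot_sroot i k : (i < 6)%N -> (k < 6)%N -> dot (sroot i) (sroot k) = (cartan i k)%:~R.
Proof.
move=> lti ltk; rewrite !sroot_vec6 // dot_vec6 !big_ord_recr big_ord0 /=.
by case: i lti => [|[|[|[|[|[|i]]]]]] //; case: k ltk => [|[|[|[|[|[|k]]]]]].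
Qed.

Lemma dot_tbar_sroot k : (k < 6)%N -> dot tbar (sroot k) = (k == 0)%:R.
Proof.
move=> ltk; rewrite sroot_vec6 // tbar_vec6 dot_vec6 !big_ord_recr big_ord0 /=.
by case: k ltk => [|[|[|[|[|[|k]]]]]].
Qed.

(** * Vectors and linear maps with integral coordinates *)

Definition of_coord (r : seq int) : vec := \sum_(k < 6) (r`_k)%:~R *: sroot k.

Lemma dot_of_coordr x r : dot x (of_coord r) = \sum_(k < 6) (r`_k)%:~R * dot x (sroot k).
Proof. by rewrite dotC dot_suml; apply: eq_bigr => k _; rewrite dotZl dotC. Qed.

Lemma dot_of_coord_sroot r k : (k < 6)%N -> dot (of_coord r) (sroot k) = (pairing r k)%:~R.
Proof.
move=> ltk; rewrite dot_suml.
under eq_bigr => i _ do rewrite dotZl dot_sroot //.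
by rewrite !big_ord_recr big_ord0 /= /pairing !intrD !intrM add0r.
Qed.

Lemma dot_of_coord u v : dot (of_coord u) (of_coord v) = (zform u v)%:~R.
Proof.
rewrite dot_suml.
under eq_bigr => k _ do rewrite dotZl dotC dot_of_coord_sroot // -intrM.
rewrite -rmorph_sum /=; congr _%:~R.
by rewrite !big_ord_recr big_ord0 /= add0r.
Qed.

Lemma dot_tbar_of_coord r : dot tbar (of_coord r) = (r`_0)%:~R.
Proof.
rewrite dot_of_coordr; under eq_bigr => k _ do rewrite dot_tbar_sroot //.
by rewrite !big_ord_recr big_ord0 /= !mulr0 !addr0 add0r mulr1.
Qed.

Lemma of_coord_mk6 f : of_coord (mk6 f) = \sum_(k < 6) (f k)%:~R *: sroot k.
Proof. by apply: eq_bigr => k _; rewrite nth_mk6. Qed.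

Lemma of_coord_unitv k : (k < 6)%N -> of_coord (unitv k) = sroot k.
Proof.
rewrite of_coord_mk6 !big_ord_recr big_ord0 /=.
by case: k => [|[|[|[|[|[|k]]]]]] // _; rewrite !scale0r ?scale1r !add0r ?addr0.
Qed.

Lemma of_coord_subZ u v c :
  of_coord (mk6 (fun i => u`_i - c * v`_i)) = of_coord u - c%:~R *: of_coord v.
Proof.
rewrite of_coord_mk6 scaler_sumr -sumrB; apply: eq_bigr => k _.
by rewrite intrD intrN intrM scalerBl scalerA.
Qed.

Lemma refl_of_coord r x :
  zform r r = 2 -> refl (of_coord r) x = x - dot x (of_coord r) *: of_coord r.
Proof. by move=> r2; rewrite /refl dot_of_coord r2 mulrC mulKf. Qed.

Definition lin_of (F : seq (seq int)) (x : vec) : vec :=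
  x + \sum_(k < 6) dot x (sroot k) *: of_coord (nth [::] F k).

Lemma lin_of_compose_refl r F x :
  zform r r = 2 -> refl (of_coord r) (lin_of F x) = lin_of (compose_refl r F) x.
Proof.
move=> r2; rewrite refl_of_coord // /lin_of.
set c := fun k : 'I_6 => r`_k + zform (nth [::] F k) r.
have -> : dot (x + \sum_(k < 6) dot x (sroot k) *: of_coord (nth [::] F k)) (of_coord r)
          = \sum_(k < 6) dot x (sroot k) * (c k)%:~R.
  rewrite dotDl dot_suml dot_of_coordr -big_split; apply: eq_bigr => k _.
  by rewrite /= dotZl dot_of_coord /c (intrD _ r`_k) mulrDr mulrC.
under [in RHS]eq_bigr => k _ do rewrite nth_mk6 // of_coord_subZ scalerBr scalerA.
by rewrite sumrB -scaler_suml addrA.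
Qed.

Lemma lin_of_id x : lin_of (word_matrix [::]) x = x.
Proof.
rewrite /lin_of big1 ?addr0 // => k _.
by rewrite nth_mk6 // of_coord_mk6 big1 ?scaler0 // => i _; rewrite scale0r.
Qed.

Lemma word_act_matrix w x : all (fun r => zform r r == 2) w ->
  word_act (map of_coord w) x = lin_of (word_matrix w) x.
Proof.
elim: w => [|r w IHw] /=; first by rewrite lin_of_id.
by case/andP=> /eqP r2 /IHw ->; rewrite lin_of_compose_refl.
Qed.

Lemma lin_of_tbar F : lin_of F tbar = tbar + of_coord (nth [::] F 0).
Proof.
rewrite /lin_of; under eq_bigr => k _ do rewrite dot_tbar_sroot //.
by rewrite !big_ord_recr big_ord0 /= !scale0r !addr0 add0r scale1r.
Qed.

(** * The roots of E6 *)

Definition coord8 (r : seq int) : seq int :=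
  mk8 (fun j => r`_0 * (simple6 0)`_j + r`_1 * (simple6 1)`_j + r`_2 * (simple6 2)`_j +
                r`_3 * (simple6 3)`_j + r`_4 * (simple6 4)`_j + r`_5 * (simple6 5)`_j).

Lemma of_coord_vec6 r : of_coord r = vec6 (coord8 r).
Proof.
rewrite /of_coord; under eq_bigr => k _ do rewrite sroot_vec6 //.
apply/rowP => j; rewrite summxE !big_ord_recr big_ord0 /= !mxE nth_mk8 //.
by rewrite !intrD !intrM; field.
Qed.

Lemma vec6N l : vec6 (map -%R l) = - vec6 l.
Proof.
apply/rowP => j; rewrite !mxE; case: (ltnP j (size l)) => [ltj | lej].
  by rewrite (nth_map 0) // intrN mulNr.
by rewrite !nth_default ?size_map // oppr0 mul0r oppr0.
Qed.

Definition listed_root (a : vec) : Prop :=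
  exists2 r, r \in pos_roots & a = of_coord r \/ a = - of_coord r.

Lemma listed_root_opp a : listed_root a -> listed_root (- a).
Proof. by case=> r r_pos [->|->]; exists r; rewrite ?opprK; auto. Qed.

Definition listed6 (l : seq int) : bool :=
  has (fun r => (coord8 r == l) || (coord8 r == map -%R l)) pos_roots.

Lemma listed_root_vec6 l : listed6 l -> listed_root (vec6 l).
Proof.
case/hasP=> r r_pos /orP[]/eqP r8; exists r; rewrite // of_coord_vec6 r8 ?vec6N ?opprK; auto.
Qed.

Definition pair6 (i j : nat) (s : int) : seq int :=
  mk8 (fun k => (k == i.-1)%:R * 6 + s * (k == j.-1)%:R * 6).

Lemma e_add_vec6 i j s : e i + s%:~R *: e j = vec6 (pair6 i j s).
Proof.
apply/rowP => k; rewrite !mxE nth_mk8 //.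
by case: (_ == i.-1); case: (_ == j.-1); rewrite /= ?intrD ?intrM; field.
Qed.

Lemma pairs_listed : all (fun i => all (fun j =>
  (i < j)%N ==> all (fun s => listed6 (pair6 i j s)) [:: 1; -1]) (iota 1 5)) (iota 1 5).
Proof. by vm_compute. Qed.

Definition spin6 (s : seq int) : seq int :=
  mk8 (fun j => if (j < 5)%N then 3 * s`_j else if j == 7%N then 3 else -3).

Lemma spin_vec6 (s : seq int) :
  (1/2) *: (\sum_(k < 5) (s`_k)%:~R *: e k.+1 + e 8 - e 7 - e 6) = vec6 (spin6 s).
Proof.
apply/rowP => j; rewrite !mxE summxE !big_ord_recr big_ord0 /= !mxE nth_mk8 //.
by case: j => [[|[|[|[|[|[|[|[|j]]]]]]]] ?] //=; rewrite ?intrM; field.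
Qed.

Fixpoint signs (n : nat) : seq (seq int) :=
  if n is n'.+1 then [seq x :: l | x <- [:: 1; -1], l <- signs n'] else [:: [::]].

Lemma mem_signs l : all (mem [:: 1; -1]) l -> l \in signs (size l).
Proof.
elim: l => // x l IHl /andP[x_pm /IHl l_signs].
exact: (allpairs_f (fun x l => x :: l) x_pm l_signs).
Qed.

Lemma spins_listed :
  all (fun s => (s`_0 * s`_1 * s`_2 * s`_3 * s`_4 == 1) ==> listed6 (spin6 s)) (signs 5).
Proof. by vm_compute. Qed.

Lemma root_listed a : isRoot a -> listed_root a.
Proof.
case=> [[i [j [[i1 ij j5]]]] | [mu [mu1 [prod1]]]].
  have signed s : s \in [:: 1; -1] -> listed_root (e i + s%:~R *: e j).
    move=> s_pm; rewrite e_add_vec6; apply: listed_root_vec6.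
    have i_in : i \in iota 1 5 by rewrite mem_iota; lia.
    have j_in : j \in iota 1 5 by rewrite mem_iota; lia.
    by move/allP/(_ i i_in)/allP/(_ j j_in): pairs_listed; rewrite ij => /allP; apply.
  move: (signed 1 isT) (signed (-1) isT); rewrite scale1r scaleN1r => Hp Hm.
  by case=> [->|[->|[->|->]]]; try apply/listed_root_opp.
pose s := [seq if mu (inord k) == 1 then 1 else -1 | k <- iota 0 5] : seq int.
have mus (k : 'I_5) : mu k = (s`_k)%:~R.
  rewrite (nth_map 0%N) ?size_iota // nth_iota // add0n inord_val.
  by case: (mu1 k) => ->; rewrite ?eqxx.
have s_signs : s \in signs 5.
  have := @mem_signs s; rewrite size_map size_iota; apply.
  by apply/allP => x /mapP[k _ ->]; case: ifP.
clearbody s.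
have sprod : s`_0 * s`_1 * s`_2 * s`_3 * s`_4 = 1.
  apply: (@intr_inj rat); move: prod1.
  by rewrite !big_ord_recr big_ord0 /= !mus mul1r !intrM.
have /allP/(_ s s_signs) := spins_listed; rewrite sprod eqxx => /listed_root_vec6.
under eq_bigr => k _ do rewrite mus; rewrite -spin_vec6 /= => Hs.
by case=> ->; last apply: listed_root_opp.
Qed.

Lemma isRoot_opp a : isRoot a -> isRoot (- a).
Proof.
case=> [[i [j [ij Ha]]] | [mu [mu1 [prod1 /= Ha]]]]; [left; exists i, j | right; exists mu].
  by split=> //; case: Ha => [->|[->|[->|->]]]; rewrite ?opprK; tauto.
by split=> //; split=> //=; case: Ha => ->; rewrite ?opprK; tauto.
Qed.

Lemma pos_root_ge0 r i : r \in pos_roots -> 0 <= r`_i.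
Proof.
move=> r_pos; have /andP[_ /allP r_ge0] := allP pos_rootsP r r_pos.
by case: (ltnP i (size r)) => [/(mem_nth 0)/r_ge0 | /(nth_default 0)->].
Qed.

Lemma zform_pos_root r : r \in pos_roots -> zform r r = 2.
Proof. by move=> r_pos; have /andP[/eqP] := allP pos_rootsP r r_pos. Qed.

Lemma isPosRoot_of_coord r : r \in pos_roots -> isRoot (of_coord r) -> isPosRoot (of_coord r).
Proof.
move=> r_pos r_root; split=> //; exists (fun i : 'I_6 => absz r`_i).
apply: eq_bigr => i _; rewrite simple_sroot natr_absz ger0_norm //.
exact: pos_root_ge0.
Qed.

Lemma root_sign a : isRoot a -> exists b, isPosRoot b /\ (a = b \/ a = - b).
Proof.
move=> a_root; have [r r_pos Ea] := root_listed a_root.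
have r_root : isRoot (of_coord r).
  by case: Ea => Ea; [rewrite -Ea | rewrite -[of_coord r]opprK -Ea; apply: isRoot_opp].
by exists (of_coord r); split; first exact: isPosRoot_of_coord.
Qed.

Lemma dot_root a : isRoot a -> dot a a = 2.
Proof.
case/root_listed=> r r_pos [->|->]; rewrite ?dotNl ?dotNr ?opprK dot_of_coord;
by rewrite zform_pos_root.
Qed.

Lemma refl_root a v : isRoot a -> refl a v = v - dot v a *: a.
Proof. by move=> a_root; rewrite /refl dot_root // mulrC mulKf. Qed.

(** * The lattice H^2(BT) *)

Lemma in_H2_0 : in_H2 0.
Proof. by exists (fun=> 0); rewrite /vec_of big1 // => i _; rewrite scale0r. Qed.

Lemma in_H2D u v : in_H2 u -> in_H2 v -> in_H2 (u + v).
Proof.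
move=> [c <-] [d <-]; exists (fun i => c i + d i).
by rewrite /vec_of -big_split; apply: eq_bigr => i _; rewrite intrD scalerDl.
Qed.

Lemma in_H2Z (z : int) v : in_H2 v -> in_H2 (z%:~R *: v).
Proof.
move=> [c <-]; exists (fun i => z * c i).
by rewrite /vec_of scaler_sumr; apply: eq_bigr => i _; rewrite intrM scalerA.
Qed.

Definition H2basis6 (i : nat) : seq int :=
  match i with
  | 0%N => [:: 6; 0; 0; 0; 0; -2; -2; 2]
  | 1%N => [:: 0; 6; 0; 0; 0; -2; -2; 2]
  | 2%N => [:: 0; 0; 6; 0; 0; -2; -2; 2]
  | 3%N => [:: 0; 0; 0; 6; 0; -2; -2; 2]
  | 4%N => [:: 0; 0; 0; 0; 6; -2; -2; 2]
  | _ => [:: 3; 3; 3; 3; 3; -3; -3; 3]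
  end.

Lemma H2basis_vec6 (i : 'I_6) : H2basis i = vec6 (H2basis6 i).
Proof.
by rewrite /H2basis /t /xgen /u0 /e; case: i => [[|[|[|[|[|[|i]]]]]] ?] //=; vec8_eq.
Qed.

Definition sroot_H2 (k : nat) : seq int :=
  match k with
  | 0%N => [:: 2; 1; 1; 1; 1; -3]
  | 1%N => [:: 0; 0; -1; -1; -1; 2]
  | 2%N => [:: -1; 1; 0; 0; 0; 0]
  | 3%N => [:: 0; -1; 1; 0; 0; 0]
  | 4%N => [:: 0; 0; -1; 1; 0; 0]
  | _ => [:: 0; 0; 0; -1; 1; 0]
  end.

Lemma in_H2_sroot k : (k < 6)%N -> in_H2 (sroot k).
Proof.
move=> ltk; exists (fun i : 'I_6 => (sroot_H2 k)`_i).
rewrite sroot_vec6 // /vec_of; under eq_bigr => i _ do rewrite H2basis_vec6.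
rewrite vec6_sum /mk8 !big_ord_recr !big_ord0 /=; congr vec6.
by case: k ltk => [|[|[|[|[|[|k]]]]]].
Qed.

Lemma in_H2_root a : isRoot a -> in_H2 a.
Proof.
have in_H2_coord r : in_H2 (of_coord r).
  apply: (big_ind in_H2); [exact: in_H2_0 | exact: in_H2D |].
  by move=> k _; apply/in_H2Z/in_H2_sroot.
by case/root_listed=> r _ [->|->]; rewrite // -scaleN1r -[-1]/((-1)%:~R); apply: in_H2Z.
Qed.

Lemma label_opp a p : label a p -> label (- a) p.
Proof.
move=> [c [<- [r ->]]]; exists (fun i => - c i); split.
  by rewrite /vec_of -sumrN; apply: eq_bigr => i _; rewrite intrN scaleNr.
exists (- r); suff -> : h2 (fun i => - c i) = - h2 c by rewrite mulrNN.
by rewrite /h2 -sumrN; apply: eq_bigr => i _; rewrite mpolyCN mulNr.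
Qed.

(** * Cosets of W(D5) *)

Lemma word_act_cat s1 s2 x : word_act (s1 ++ s2) x = word_act s1 (word_act s2 x).
Proof. by elim: s1 => //= a s IHs; rewrite IHs. Qed.

Definition d5_act (u : seq nat) : endo := word_act (map sroot u).

Lemma d5_act_cat u v x : d5_act (u ++ v) x = d5_act u (d5_act v x).
Proof. by rewrite /d5_act map_cat word_act_cat. Qed.

Lemma refl_sroot_tbar k : (0 < k < 6)%N -> refl (sroot k) tbar = tbar.
Proof.
case/andP; rewrite lt0n => /negbTE k0 ltk.
by rewrite /refl dot_tbar_sroot // k0 mulr0 mul0r scale0r subr0.
Qed.

Lemma d5_act_tbar u : d5_word u -> d5_act u tbar = tbar.
Proof.
by elim: u => //= k u IHu /andP[k5 /IHu]; rewrite /d5_act /= => ->; rewrite refl_sroot_tbar.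
Qed.

Lemma d5_act_rev u x : d5_word u -> d5_act u (d5_act (rev u) x) = x.
Proof.
elim: u x => //= k u IHu x /andP[/andP[_ ltk] u5].
rewrite rev_cons -cats1 d5_act_cat -[d5_act (k :: u) _]/(refl (sroot k) (d5_act u _)).
rewrite IHu // refl_involutive //.
by rewrite dot_sroot //; case: k ltk => [|[|[|[|[|[|k]]]]]].
Qed.

Lemma inWD5_d5_act u : d5_word u -> inWD5 (d5_act u).
Proof.
move=> u5; exists (map sroot u); split=> // a /mapP[k k_u ->].
have /andP[k0 ltk] := allP u5 k k_u.
by exists (Ordinal ltk); rewrite simple_sroot.
Qed.

Lemma inWD5_tbar w : inWD5 w -> w tbar = tbar.
Proof.
case=> s [s_simple ->]; elim: s s_simple => //= a s IHs s_simple.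
rewrite IHs => [|b b_s]; last by apply: s_simple; rewrite inE b_s orbT.
have [i [i0 ->]] := s_simple a (mem_head _ _).
by rewrite simple_sroot refl_sroot_tbar // i0 ltn_ord.
Qed.

Definition coset_rep (p : nat) : endo := word_act (map of_coord (coset_word p)).

Lemma size_coset_words : size coset_words = 27%N.
Proof. by case/and3P: coset_wordsP => /eqP. Qed.

Lemma coset_word0 : coset_word 0 = [::].
Proof. by case/and3P: coset_wordsP => _ /eqP. Qed.

Lemma coset_word_normed p : all (fun r => zform r r == 2) (coset_word p).
Proof.
have /and3P[_ _ /allP ws_simple] := coset_wordsP.
case: (ltnP p (size coset_words)) => [ltp | lep]; last by rewrite /coset_word (nth_default _ lep).
apply/allP => r /(allP (ws_simple _ (mem_nth [::] ltp))) /mapP[k].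
by rewrite mem_iota => /andP[_ ltk] ->; case: k ltk => [|[|[|[|[|[|k]]]]]].
Qed.

Lemma coset_rep_tbar p : coset_rep p tbar = tbar + of_coord (lambda_coord (coset_word p)).
Proof. by rewrite /coset_rep word_act_matrix ?coset_word_normed // lin_of_tbar. Qed.

Lemma refl_coset_rep p r : (p < 27)%N -> r \in pos_roots ->
  exists q u, [/\ (q < 27)%N, d5_word u &
    forall x, refl (of_coord r) (coset_rep p x) = coset_rep q (d5_act u x)].
Proof.
move=> ltp r_pos.
have [q [u /and3P[ltq u5 /eqP Ew]]] : exists q u, [&& (q < 27)%N, d5_word u &
    word_matrix (r :: coset_word p) == word_matrix (coset_word q ++ map unitv u)].
  have /allP/(_ p) := schreierP; rewrite mem_iota => /(_ ltp) /allP/(_ r r_pos) entry.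
  by do 2!eexists; exact entry.
exists q, u; split=> // x.
have u_normed : all (fun r => zform r r == 2) (map unitv u).
  by apply/allP => _ /mapP[k /(allP u5)/andP[_ ltk] ->]; case: k ltk => [|[|[|[|[|[|k]]]]]].
rewrite /coset_rep -[refl _ _]/(word_act (map of_coord (r :: coset_word p)) x).
rewrite word_act_matrix; last by rewrite /= zform_pos_root // coset_word_normed.
rewrite Ew.
rewrite -word_act_matrix ?all_cat ?coset_word_normed ?u_normed //.
rewrite map_cat word_act_cat -map_comp; congr (word_act _ (word_act _ x)).
by apply/eq_in_map => k /(allP u5) /andP[_ ltk]; rewrite /= of_coord_unitv.
Qed.

Lemma inWE6_coset w : inWE6 w ->
  exists p u, [/\ (p < 27)%N, d5_word u & forall x, w x = coset_rep p (d5_act u x)].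
Proof.
case=> s [s_roots Ew].
suff [p [u [ltp u5 Es]]] : exists p u,
    [/\ (p < 27)%N, d5_word u & forall x, word_act s x = coset_rep p (d5_act u x)].
  by exists p, u; split=> // x; rewrite Ew.
elim: s s_roots {Ew} => [|a s IHs] s_roots.
  by exists 0%N, [::]; split=> [//|//|x]; rewrite /coset_rep coset_word0.
have [p [u [ltp u5 Es]]] := IHs (fun b b_s => s_roots b (mem_behead (s := a :: s) b_s)).
have [r r_pos Ea] := root_listed (s_roots a (mem_head _ _)).
have [q [v [ltq v5 Er]]] := refl_coset_rep ltp r_pos.
exists q, (v ++ u); split=> [||x] //; first by rewrite /d5_word all_cat; apply/andP.
by rewrite /= Es d5_act_cat -Er; case: Ea => ->; rewrite ?refl_opp.
Qed.

Lemma uniq_map_nth_inj (T U : eqType) (f : T -> U) (x0 : T) s i j :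
  uniq (map f s) -> (i < size s)%N -> (j < size s)%N ->
  f (nth x0 s i) = f (nth x0 s j) -> i = j.
Proof.
move=> f_uniq lti ltj E; apply/eqP.
by rewrite -(nth_uniq (f x0) _ _ f_uniq) ?size_map // !(nth_map x0) // E.
Qed.

Lemma coset_rep_tbar_inj p p' : (p < 27)%N -> (p' < 27)%N ->
  coset_rep p tbar = coset_rep p' tbar -> p = p'.
Proof.
move=> ltp ltp' E.
have Epair : lambda_pairings (coset_word p) = lambda_pairings (coset_word p').
  apply/eq_in_map => k; rewrite mem_iota => /andP[_ ltk]; apply/(@intr_inj rat).
  move/(congr1 (dot^~ (sroot k))): E.
  by rewrite !coset_rep_tbar !dotDl !dot_of_coord_sroot // => /addrI.
by apply: (uniq_map_nth_inj (x0 := [::]) coset_lambdas_uniq); rewrite ?size_coset_words.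
Qed.

Lemma sameCosetP v w : inWE6 v -> inWE6 w -> sameCoset v w <-> v tbar = w tbar.
Proof.
move=> /inWE6_coset[p [u [ltp u5 Ev]]] /inWE6_coset[p' [u' [ltp' u5' Ew]]].
split=> [[d [d_D5 Ed]] | E]; first by rewrite Ed (inWD5_tbar d_D5).
have Ep : p = p'.
  by apply: coset_rep_tbar_inj => //; move: E; rewrite Ev Ew (d5_act_tbar u5) (d5_act_tbar u5').
exists (d5_act (rev u ++ u')); split.
  by apply: inWD5_d5_act; rewrite /d5_word all_cat all_rev; apply/andP.
by move=> x; rewrite Ev d5_act_cat d5_act_rev // Ew Ep.
Qed.

Lemma dot_tbar_root w a : inWE6 w -> isRoot a ->
  [\/ dot (w tbar) a = -1, dot (w tbar) a = 0 | dot (w tbar) a = 1].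
Proof.
move=> /inWE6_coset[p [u [ltp u5 ->]]] /root_listed[r r_pos Ea].
have : lambda_pairing (lambda_coord (coset_word p)) r \in [:: -1; 0; 1].
  have /allP/(_ (coset_word p)) := minusculeP.
  by rewrite mem_nth ?size_coset_words // => /(_ isT) /allP; apply.
rewrite d5_act_tbar // coset_rep_tbar; set o := lambda_coord _.
have dot_r : dot (tbar + of_coord o) (of_coord r) = (lambda_pairing o r)%:~R.
  by rewrite dotDl dot_tbar_of_coord dot_of_coord [RHS]intrD.
rewrite !inE; case: Ea => ->; rewrite ?dotNr dot_r; case/or3P=> /eqP->;
  by [apply: Or31 | apply: Or32 | apply: Or33].
Qed.

(** * The GKM graph *)

Lemma inWE6_refl a w : isRoot a -> inWE6 w -> inWE6 (fun x => refl a (w x)).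
Proof.
move=> a_root [s [s_roots Ew]]; exists (a :: s); split=> [b|x]; last by rewrite Ew.
by rewrite inE => /predU1P[->|/s_roots].
Qed.

Lemma gkm_edgeP v w b : inWE6 v -> inWE6 w ->
  gkm_edge v w b <-> [/\ v tbar <> w tbar, isPosRoot b & refl b (v tbar) = w tbar].
Proof.
move=> v6 w6; rewrite /gkm_edge (sameCosetP v6 w6).
split=> [[vw [b_pos]] | [vw b_pos Ew]].
  by rewrite (sameCosetP (inWE6_refl b_pos.1 v6) w6).
by do 2!split=> //; rewrite (sameCosetP (inWE6_refl b_pos.1 v6) w6).
Qed.

Lemma gkm_edge_diff v w b : inWE6 v -> inWE6 w -> gkm_edge v w b ->
  v tbar - w tbar = b \/ v tbar - w tbar = - b.
Proof.
move=> v6 w6 /(gkm_edgeP _ v6 w6) [vw [b_root _] Ew].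
rewrite -Ew refl_root // subKr.
case: (dot_tbar_root v6 b_root) => c_val; rewrite c_val ?scaleN1r ?scale1r; [by right | | by left].
by case: vw; rewrite -Ew refl_root // c_val scale0r subr0.
Qed.

Lemma refl_tbar_diff v w a : inWE6 v -> inWE6 w -> isRoot a ->
  v tbar - w tbar = a -> refl a (v tbar) = w tbar.
Proof.
move=> v6 w6 a_root Ea.
have Ew : w tbar = v tbar - a by rewrite -Ea opprB addrC subrK.
have dot_w : dot (w tbar) a = dot (v tbar) a - 2 by rewrite Ew dotBl dot_root.
suff dot_v : dot (v tbar) a = 1 by rewrite refl_root // dot_v scale1r Ew.
move: (dot_tbar_root w6 a_root); rewrite dot_w.
by case: (dot_tbar_root v6 a_root) => ->; case=> /eqP.
Qed.

Theorem proposition4p1 :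
  forall (lam lam' : vec) (rho rho' : endo),
    inLambda lam -> inLambda lam' ->
    inWE6 rho -> rho tbar = lam ->
    inWE6 rho' -> rho' tbar = lam' ->
    (gkm_adjacent rho rho' <-> exists alpha, isRoot alpha /\ lam - lam' = alpha) /\
    (forall alpha beta : vec,
       isRoot alpha -> lam - lam' = alpha -> gkm_edge rho rho' beta ->
       in_H2 alpha /\ in_H2 beta /\
       (forall p : HBT, label beta p <-> label alpha p)).
Proof.
move=> lam lam' rho rho' _ _ rho6 <- rho'6 <-.
split; first split.
- move=> [b edge]; have [_ [[b_root _] _]] := edge.
  exists (rho tbar - rho' tbar); split=> //.
  by case: (gkm_edge_diff rho6 rho'6 edge) => ->; last apply: isRoot_opp.
- move=> [a [a_root Ea]]; have [b [b_pos Eab]] := root_sign a_root.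
  exists b; apply/(gkm_edgeP _ rho6 rho'6); split=> //.
    by move=> E; move: (dot_root a_root); rewrite -Ea E subrr dot0l => /eqP.
  by rewrite -(refl_tbar_diff rho6 rho'6 a_root Ea); case: Eab => ->; rewrite ?refl_opp.
move=> a b a_root Ea edge; have [_ [[b_root _] _]] := edge.
split; [exact: in_H2_root | split; first exact: in_H2_root].
case: (gkm_edge_diff rho6 rho'6 edge); rewrite Ea => -> p //.
by split; [apply: label_opp | move/label_opp; rewrite opprK].
Qed.
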